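(* Let $a,b\in\mathbb{R}$ with $a<b$, let $n\in\mathbb{N}$ with $n\ge2$, and let $q\ge1$. Then $$\left|A(a^n,b^n)-L_n^n(a,b)\right|\le \frac{n(n-1)(b-a)^2}{4}\left(\frac{2}{(q+1)(q+2)}\right)^{\frac1q}\left(\max\{|a|^{(n-2)q},|b|^{(n-2)q}\}\right)^{\frac1q}.$$
   Context: $A(x,y)=\frac{x+y}{2}$ (arithmetic mean). For $a\ne b$ and $n\in\mathbb{Z}\setminus\{-1,0\}$, $L_n(a,b)=\left[\frac{b^{n+1}-a^{n+1}}{(n+1)(b-a)}\right]^{1/n}$ (generalized logarithmic mean), so $L_n^n(a,b)=\frac{b^{n+1}-a^{n+1}}{(n+1)(b-a)}$. *)

From Stdlib Require Import Reals Lra.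
Open Scope R_scope.

(* Real power x^y for x >= 0, with the usual conventions
   0^y = 0 for y <> 0 (y > 0 in our use) and 0^0 = 1.
   (Stdlib's Rpower gives Rpower 0 y = 1, which is wrong for y > 0.) *)
Definition rpow (x y : R) : R :=
  if Rlt_dec 0 x then Rpower x y
  else if Req_EM_T y 0 then 1 else 0.

Definition AM (x y : R) : R := (x + y) / 2.

Definition Ln_pow (n : nat) (a b : R) : R :=
  (b ^ (n + 1) - a ^ (n + 1)) / (INR (n + 1) * (b - a)).

From Stdlib Require Import Reals Lra Lia.
Open Scope R_scope.

(* Write K = max(|a|,|b|).  We prove the sharper estimate
     |A(a^n,b^n) - L_n^n(a,b)| <= n(n-1)(b-a)^2/12 * K^(n-2)
   and then observe that the q-dependent factors of the stated bound are
   harmless: (2/((q+1)(q+2)))^(1/q) >= 1/3 for q >= 1, and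
   (max(|a|^((n-2)q), |b|^((n-2)q)))^(1/q) = K^(n-2).
   For the sharper estimate, with G = sum_{k=0}^n a^k b^(n-k) we have
   (b-a) G = b^(n+1) - a^(n+1), whence the identity
     2(n+1) (A(a^n,b^n) - L_n^n(a,b)) = sum_{k=0}^n (a^k-b^k)(a^(n-k)-b^(n-k)).
   Each difference satisfies |a^k-b^k| <= (b-a) k K^(k-1) (again via G), so
   the k-th term is at most (b-a)^2 k(n-k) K^(n-2), and
   sum_{k=0}^n k(n-k) = (n-1)n(n+1)/6 finishes the computation. *)

Lemma pow_split (x : R) (n i : nat) : (i <= n)%nat -> x ^ n = x ^ i * x ^ (n - i).
Proof. intro Hi. rewrite <- pow_add. f_equal. lia. Qed.

Definition geom_sum (a b : R) (n : nat) : R :=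
  sum_f_R0 (fun k => a ^ k * b ^ (n - k)) n.

Lemma geom_sum_S (a b : R) (n : nat) :
  geom_sum a b (S n) = b * geom_sum a b n + a ^ S n.
Proof.
  unfold geom_sum. rewrite tech5, Nat.sub_diag, pow_O, Rmult_1_r.
  f_equal. rewrite scal_sum. apply sum_eq; intros i Hi.
  rewrite Nat.sub_succ_l by exact Hi. simpl. ring.
Qed.

Lemma geom_sum_telescope (a b : R) (n : nat) :
  (b - a) * geom_sum a b n = b ^ S n - a ^ S n.
Proof.
  induction n as [|n IH].
  - unfold geom_sum. simpl. ring.
  - rewrite geom_sum_S.
    replace ((b - a) * (b * geom_sum a b n + a ^ S n))
      with (b * ((b - a) * geom_sum a b n) + (b - a) * a ^ S n) by ring.
    rewrite IH. simpl. ring.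
Qed.

(* G_n is symmetric (we only need it off the diagonal, where it follows
   from the factorisation). *)
Lemma geom_sum_sym (a b : R) (n : nat) : a <> b -> geom_sum b a n = geom_sum a b n.
Proof.
  intro Hab. apply (Rmult_eq_reg_l (b - a)); [|lra].
  rewrite geom_sum_telescope. replace (b - a) with (- (a - b)) by ring.
  rewrite Ropp_mult_distr_l_reverse, geom_sum_telescope. ring.
Qed.

(* Each of the n+1 terms of G_n is bounded by K^n. *)
Lemma geom_sum_bound (a b : R) (n : nat) :
  Rabs (geom_sum a b n) <= INR (S n) * Rmax (Rabs a) (Rabs b) ^ n.
Proof.
  set (K := Rmax (Rabs a) (Rabs b)).
  unfold geom_sum. eapply Rle_trans; [apply sum_f_R0_triangle|].
  apply Rle_trans with (sum_f_R0 (fun _ => K ^ n) n); [|rewrite sum_cte; lra].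
  apply sum_Rle; intros i Hi. rewrite Rabs_mult, <- !RPow_abs, (pow_split K n i Hi).
  apply Rmult_le_compat; try apply pow_le; try apply Rabs_pos;
    apply pow_incr; split; try apply Rabs_pos; [apply Rmax_l | apply Rmax_r].
Qed.

(* Mean-value type bound |a^k - b^k| <= (b-a) k K^(k-1), multiplied by K
   to avoid the case k = 0. *)
Lemma pow_diff_bound (a b : R) (k : nat) : a < b ->
  Rabs (a ^ k - b ^ k) * Rmax (Rabs a) (Rabs b)
  <= (b - a) * INR k * Rmax (Rabs a) (Rabs b) ^ k.
Proof.
  intro Hab. set (K := Rmax (Rabs a) (Rabs b)).
  assert (HK : 0 <= K) by (eapply Rle_trans; [apply Rabs_pos | apply Rmax_l]).
  destruct k as [|k].
  - simpl. rewrite Rminus_diag, Rabs_R0. lra.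
  - replace (a ^ S k - b ^ S k) with (- ((b - a) * geom_sum a b k))
      by (rewrite geom_sum_telescope; ring).
    rewrite Rabs_Ropp, Rabs_mult, (Rabs_pos_eq (b - a)) by lra.
    pose proof (geom_sum_bound a b k) as HG. fold K in HG.
    replace ((b - a) * INR (S k) * K ^ S k)
      with ((b - a) * (INR (S k) * K ^ k) * K) by (simpl; ring).
    apply Rmult_le_compat_r; [exact HK|]. apply Rmult_le_compat_l; lra.
Qed.

Lemma sum_id (n : nat) : sum_f_R0 INR n = INR n * (INR n + 1) / 2.
Proof. induction n as [|n IH]; [simpl; lra|]. rewrite tech5, IH, S_INR. field. Qed.

Lemma sum_sq (n : nat) :
  sum_f_R0 (fun k => INR k * INR k) n = INR n * (INR n + 1) * (2 * INR n + 1) / 6.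
Proof. induction n as [|n IH]; [simpl; lra|]. rewrite tech5, IH, S_INR. field. Qed.

Lemma sum_k_times_complement (n : nat) :
  sum_f_R0 (fun k => INR k * INR (n - k)) n = INR n * (INR n + 1) * (INR n - 1) / 6.
Proof.
  rewrite (sum_eq _ (fun k => INR k * INR n - INR k * INR k)).
  - rewrite minus_sum, <- (scal_sum INR n (INR n)), sum_id, sum_sq. field.
  - intros i Hi. rewrite minus_INR by exact Hi. ring.
Qed.

Lemma mean_gap_identity (a b : R) (n : nat) : a < b ->
  AM (a ^ n) (b ^ n) - Ln_pow n a b
  = sum_f_R0 (fun k => (a ^ k - b ^ k) * (a ^ (n - k) - b ^ (n - k))) n
    / (2 * INR (n + 1)).
Proof.
  intro Hab.
  assert (Hn1 : 0 < INR (n + 1)) by (apply lt_0_INR; lia).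
  assert (Hsum : sum_f_R0 (fun k => (a ^ k - b ^ k) * (a ^ (n - k) - b ^ (n - k))) n
                 = INR (n + 1) * (a ^ n + b ^ n) - 2 * geom_sum a b n).
  { rewrite (sum_eq _ (fun k => (a ^ n + b ^ n - a ^ k * b ^ (n - k))
                                 - b ^ k * a ^ (n - k))).
    - rewrite minus_sum, minus_sum, sum_cte.
      fold (geom_sum a b n) (geom_sum b a n). rewrite geom_sum_sym by lra.
      replace (S n) with (n + 1)%nat by lia. ring.
    - intros i Hi. rewrite (pow_split a n i Hi), (pow_split b n i Hi). ring. }
  assert (Hpow : b ^ (n + 1) - a ^ (n + 1) = (b - a) * geom_sum a b n)
    by (rewrite geom_sum_telescope; replace (S n) with (n + 1)%nat by lia; ring).
  unfold AM, Ln_pow. rewrite Hsum, Hpow. field. split; lra.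
Qed.

Lemma absmax_pos (a b : R) : a < b -> 0 < Rmax (Rabs a) (Rabs b).
Proof.
  intro Hab. destruct (Req_dec a 0) as [->|Ha].
  - eapply Rlt_le_trans; [|apply Rmax_r]. rewrite Rabs_pos_eq; lra.
  - eapply Rlt_le_trans; [|apply Rmax_l]. apply Rabs_pos_lt, Ha.
Qed.

Lemma gap_term_bound (a b : R) (n k : nat) : a < b -> (2 <= n)%nat -> (k <= n)%nat ->
  Rabs ((a ^ k - b ^ k) * (a ^ (n - k) - b ^ (n - k)))
  <= (b - a) ^ 2 * Rmax (Rabs a) (Rabs b) ^ (n - 2) * (INR k * INR (n - k)).
Proof.
  intros Hab Hn Hk. set (K := Rmax (Rabs a) (Rabs b)).
  assert (HK : 0 < K) by exact (absmax_pos a b Hab).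
  pose proof (pow_diff_bound a b k Hab) as Hk1.
  pose proof (pow_diff_bound a b (n - k) Hab) as Hk2. fold K in Hk1, Hk2.
  assert (HKn : K ^ k * K ^ (n - k) = K ^ (n - 2) * (K * K)).
  { rewrite <- (pow_split K n k Hk), (pow_split K n (n - 2)) by lia.
    replace (n - (n - 2))%nat with 2%nat by lia. simpl. ring. }
  apply (Rmult_le_reg_r (K * K)); [nra|].
  rewrite Rabs_mult.
  apply Rle_trans with (((b - a) * INR k * K ^ k) * ((b - a) * INR (n - k) * K ^ (n - k))).
  - replace (Rabs (a ^ k - b ^ k) * Rabs (a ^ (n - k) - b ^ (n - k)) * (K * K))
      with ((Rabs (a ^ k - b ^ k) * K) * (Rabs (a ^ (n - k) - b ^ (n - k)) * K)) by ring.
    apply Rmult_le_compat; auto; apply Rmult_le_pos; try apply Rabs_pos; lra.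
  - right. transitivity ((b - a) ^ 2 * (INR k * INR (n - k)) * (K ^ k * K ^ (n - k)));
      [ring | rewrite HKn; ring].
Qed.

Lemma mean_gap_bound (a b : R) (n : nat) : a < b -> (2 <= n)%nat ->
  Rabs (AM (a ^ n) (b ^ n) - Ln_pow n a b)
  <= INR n * (INR n - 1) * (b - a) ^ 2 / 12 * Rmax (Rabs a) (Rabs b) ^ (n - 2).
Proof.
  intros Hab Hn. set (C := (b - a) ^ 2 * Rmax (Rabs a) (Rabs b) ^ (n - 2)).
  assert (Hn1 : 0 < INR (n + 1)) by (apply lt_0_INR; lia).
  rewrite mean_gap_identity by exact Hab.
  unfold Rdiv at 1. rewrite Rabs_mult, (Rabs_pos_eq (/ _))
    by (apply Rlt_le, Rinv_0_lt_compat; lra).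
  apply Rle_trans with (sum_f_R0 (fun k => C * (INR k * INR (n - k))) n
                        * / (2 * INR (n + 1))).
  - apply Rmult_le_compat_r; [apply Rlt_le, Rinv_0_lt_compat; lra|].
    eapply Rle_trans; [apply sum_f_R0_triangle|].
    apply sum_Rle; intros k Hk. apply gap_term_bound; assumption.
  - rewrite (sum_eq _ (fun k => INR k * INR (n - k) * C)) by (intros; ring).
    rewrite <- scal_sum, sum_k_times_complement, plus_INR, INR_1.
    right. unfold C. field. pose proof (pos_INR n). lra.
Qed.

(* q-dependent constant: (q+1)(q+2) <= 2 * 3^q for q >= 1, since
   3^q = 3 e^(2s) with s = (q-1) ln 3 / 2 >= (q-1)/2 and e^s >= 1 + s. *)
Lemma poly_le_pow3 (q : R) : 1 <= q -> (q + 1) * (q + 2) <= 2 * Rpower 3 q.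
Proof.
  intro Hq.
  assert (Hln3 : 1 <= ln 3).
  { apply Rnot_lt_le; intro Hlt. apply exp_increasing in Hlt.
    rewrite exp_ln in Hlt by lra. pose proof exp_le_3. lra. }
  set (s := (q - 1) * ln 3 / 2).
  assert (E : Rpower 3 q = 3 * (exp s * exp s)).
  { unfold Rpower. rewrite <- exp_plus. rewrite <- (exp_ln 3) at 2 by lra.
    rewrite <- exp_plus. f_equal. unfold s. field. }
  pose proof (exp_ineq1_le s).
  assert ((q - 1) / 2 <= s) by (unfold s; nra).
  rewrite E. nra.
Qed.

Lemma rpow_pos_base (x y : R) : 0 < x -> rpow x y = Rpower x y.
Proof. intro Hx. unfold rpow. destruct (Rlt_dec 0 x); [reflexivity | lra]. Qed.

Lemma q_constant_ge_third (q : R) : 1 <= q ->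
  1 / 3 <= rpow (2 / ((q + 1) * (q + 2))) (1 / q).
Proof.
  intro Hq.
  assert (HD : 0 < (q + 1) * (q + 2)) by nra.
  assert (HP : 0 < Rpower 3 q) by apply exp_pos.
  rewrite rpow_pos_base by (apply Rdiv_lt_0_compat; lra).
  replace (1 / 3) with (Rpower (Rpower 3 (- q)) (1 / q)).
  2:{ rewrite Rpower_mult. replace (- q * (1 / q)) with (- (1)) by (field; lra).
      rewrite Rpower_Ropp, Rpower_1; lra. }
  apply Rle_Rpower_l; [apply Rlt_le, Rdiv_lt_0_compat; lra|].
  rewrite Rpower_Ropp. split; [apply Rinv_0_lt_compat, HP|].
  replace (/ Rpower 3 q) with (2 * / (2 * Rpower 3 q)) by (field; lra).
  unfold Rdiv. apply Rmult_le_compat_l; [lra|].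
  apply Rinv_le_contravar; [exact HD | apply poly_le_pow3, Hq].
Qed.

Lemma rpow_le_base (x y e : R) : 0 <= e -> 0 <= x <= y -> rpow x e <= rpow y e.
Proof.
  intros He Hxy. unfold rpow.
  destruct (Rlt_dec 0 x), (Rlt_dec 0 y), (Req_EM_T e 0); try lra.
  - apply Rle_Rpower_l; lra.
  - apply Rle_Rpower_l; lra.
  - subst e. rewrite Rpower_O by lra. lra.
  - left. apply exp_pos.
Qed.

Lemma rpow_max_base (x y e : R) : 0 <= e -> 0 <= x -> 0 <= y ->
  Rmax (rpow x e) (rpow y e) = rpow (Rmax x y) e.
Proof.
  intros He Hx Hy. unfold Rmax at 2. destruct (Rle_dec x y).
  - apply Rmax_right, rpow_le_base; lra.
  - apply Rmax_left, rpow_le_base; lra.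
Qed.

Lemma rpow_root_of_power (x q : R) (m : nat) : 0 < x -> 0 < q ->
  rpow (rpow x (INR m * q)) (1 / q) = x ^ m.
Proof.
  intros Hx Hq.
  rewrite (rpow_pos_base x) by exact Hx.
  rewrite rpow_pos_base by apply exp_pos.
  rewrite Rpower_mult. replace (INR m * q * (1 / q)) with (INR m) by (field; lra).
  apply Rpower_pow, Hx.
Qed.

Theorem proposition6 (a b : R) (n : nat) (q : R) :
  a < b -> (2 <= n)%nat -> 1 <= q ->
  Rabs (AM (a ^ n) (b ^ n) - Ln_pow n a b) <=
    INR n * (INR n - 1) * (b - a) ^ 2 / 4
    * rpow (2 / ((q + 1) * (q + 2))) (1 / q)
    * rpow (Rmax (rpow (Rabs a) ((INR n - 2) * q))
                 (rpow (Rabs b) ((INR n - 2) * q))) (1 / q).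
Proof.
  intros Hab Hn Hq.
  pose proof (absmax_pos a b Hab) as HK.
  assert (Hn2 : 2 <= INR n) by (apply (le_INR 2), Hn).
  (* the last factor is exactly K^(n-2) *)
  replace (INR n - 2) with (INR (n - 2)) by (rewrite minus_INR by exact Hn; simpl; ring).
  rewrite rpow_max_base, rpow_root_of_power by
    (try apply Rabs_pos; try apply Rmult_le_pos; try apply pos_INR; lra).
  (* the q-constant is at least 1/3, turning 1/4 into the sharp 1/12 *)
  pose proof (q_constant_ge_third q Hq) as Hthird.
  set (r := rpow (2 / ((q + 1) * (q + 2))) (1 / q)) in *.
  set (K := Rmax (Rabs a) (Rabs b)) in *.
  assert (HC : 0 <= INR n * (INR n - 1) * (b - a) ^ 2 * K ^ (n - 2))
    by (pose proof (pow_lt K (n - 2) HK); apply Rmult_le_pos; [|lra];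
        apply Rmult_le_pos; nra).
  assert (Hr : 0 <= r - 1 / 3) by lra.
  pose proof (Rmult_le_pos _ _ HC Hr) as Hprod.
  eapply Rle_trans; [apply mean_gap_bound; assumption | fold K; nra].
Qed.
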